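(* For all integers $k\ge 1$ and $n>2k$, $b_{2k}(n)-b_{2k}(n-1)\ge\frac12\binom{n-1}{2k-1}$.
   Context: For $n$ and $t$ with $n/2+t$ a nonnegative integer and $|t|\le n/2$, ${\cal B}^{(2k)}(n,t)$ is the $2k$-uniform hypergraph whose vertex set of size $n$ is partitioned into $V_1,V_2$ with $|V_1|=n/2+t$, $|V_2|=n/2-t$, and whose edges are all $2k$-subsets meeting each of $V_1,V_2$ in an odd number of elements; $b_{2k}(n)$ is the maximum of its number of edges over all admissible $t$. *)

From mathcomp Require Import all_boot.
Set Implicit Arguments. Unset Strict Implicit. Unset Printing Implicit Defensive.

(* Vertex set {0,..,n-1} = 'I_n, partitioned into V1 = {i | i < a}
   (|V1| = a = n/2 + t) and V2 = its complement (|V2| = n - a = n/2 - t). *)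
Definition V1 (n a : nat) : {set 'I_n} := [set i : 'I_n | i < a].

(* Edge set of B^(2k)(n,t) with a = n/2 + t: all 2k-subsets meeting
   each of V1, V2 in an odd number of elements. *)
Definition Bedges (k n a : nat) : {set {set 'I_n}} :=
  [set S : {set 'I_n} | [&& #|S| == (2 * k)%N,
                            odd #|S :&: V1 n a| & odd #|S :&: ~: V1 n a|]].

(* b_{2k}(n): maximum number of edges over admissible t, i.e. over a = 0..n. *)
Definition b2k (k n : nat) : nat := \max_(a < n.+1) #|Bedges k n a|.

(* Put a = |V1| and let x be the vertex of index a, so that x lies in V2 when
   |V1| = a and in V1 when |V1| = a + 1.  Edges of B(n+1, a) and B(n+1, a+1)
   avoiding x are, in both hypergraphs, exactly the edges of B(n, a), while
   edges through x are determined by a (2k-1)-subset T of the other vertices: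
   x completes T to an edge of B(n+1, a) iff |T ∩ V1| is odd and to an edge of
   B(n+1, a+1) iff it is even.  Hence
     |B(n+1, a)| + |B(n+1, a+1)| = 2 |B(n, a)| + C(n, 2k-1),
   and choosing a optimal for n gives the bound. *)
From mathcomp Require Import all_boot zify.

Lemma odd_setIC (T : finType) (A S : {set T}) :
  ~~ odd #|S| -> odd #|S :&: ~: A| = odd #|S :&: A|.
Proof.
by rewrite -(cardsID A S) setDE oddD; case: (odd _); case: (odd _).
Qed.

Lemma BedgesE k n a :
  Bedges k n a = [set S : {set 'I_n} | (#|S| == 2 * k) && odd #|S :&: V1 n a|].
Proof.
apply/setP => S; rewrite !inE; case: eqP => //= HS.
by rewrite odd_setIC ?andbb // HS oddM.
Qed.

Lemma card_setID_pred (T : finType) (P Q : pred T) :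
  #|[set t | P t && Q t]| + #|[set t | P t && ~~ Q t]| = #|[set t | P t]|.
Proof.
rewrite -(cardsID [set t | Q t] [set t | P t]); congr (_ + _); apply: eq_card => t.
  by rewrite !inE.
by rewrite !inE andbC.
Qed.

Section LiftSets.

Context {m : nat} (x : 'I_m.+1).

Lemma preim_lift_imset (T : {set 'I_m}) : lift x @^-1: (lift x @: T) = T.
Proof. by apply/setP => j; rewrite inE mem_imset //; apply: lift_inj. Qed.

Lemma preim_lift_setU1 (U : {set 'I_m.+1}) : lift x @^-1: (x |: U) = lift x @^-1: U.
Proof. by apply/setP => j; rewrite !inE eq_sym (negbTE (neq_lift x j)). Qed.

Lemma notin_imset_lift (T : {set 'I_m}) : x \notin lift x @: T.
Proof. by apply/imsetP => -[j _ /eqP]; rewrite (negbTE (neq_lift x j)). Qed.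

Lemma imset_preim_lift (S : {set 'I_m.+1}) : lift x @: (lift x @^-1: S) = S :\ x.
Proof.
apply/setP => y; rewrite !inE; case: (unliftP x y) => [j ->|->].
  by rewrite mem_imset; [rewrite !inE eq_sym neq_lift | exact: lift_inj].
by rewrite eqxx (negbTE (notin_imset_lift _)).
Qed.

Lemma card_imset_lift (T : {set 'I_m}) : #|lift x @: T| = #|T|.
Proof. by apply: card_imset; apply: lift_inj. Qed.

Lemma card_setI_imset_lift (T : {set 'I_m}) (A : {set 'I_m.+1}) :
  #|lift x @: T :&: A| = #|T :&: lift x @^-1: A|.
Proof.
rewrite -card_imset_lift; apply: eq_card => y; rewrite !inE.
case: (unliftP x y) => [j ->|->].
  by rewrite !mem_imset ?inE //; apply: lift_inj.
by rewrite !(negbTE (notin_imset_lift _)).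
Qed.

Lemma card_setI_setU1_lift (T : {set 'I_m}) (A : {set 'I_m.+1}) :
  #|(x |: lift x @: T) :&: A| = (x \in A) + #|T :&: lift x @^-1: A|.
Proof.
rewrite setIUl; case: (boolP (x \in A)) => xA.
  rewrite (setIidPl _) ?sub1set // cardsU1 in_setI (negbTE (notin_imset_lift _)).
  by rewrite card_setI_imset_lift.
rewrite (_ : [set x] :&: A = set0) ?set0U ?card_setI_imset_lift //.
by apply/disjoint_setI0; rewrite disjoints1.
Qed.

Lemma card_set_split_lift (P : {set 'I_m.+1} -> bool) :
  #|[set S | P S]| =
  #|[set T : {set 'I_m} | P (lift x @: T)]| +
  #|[set T : {set 'I_m} | P (x |: lift x @: T)]|.
Proof.
have inj_avoid : injective (fun T : {set 'I_m} => lift x @: T).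
  exact: (@can_inj _ _ _ (fun S : {set 'I_m.+1} => lift x @^-1: S)) preim_lift_imset.
have inj_through : injective (fun T : {set 'I_m} => x |: lift x @: T).
  apply: (@can_inj _ _ _ (fun S : {set 'I_m.+1} => lift x @^-1: S)) => T.
  by rewrite preim_lift_setU1 preim_lift_imset.
rewrite -(cardsID [set S : {set 'I_m.+1} | x \notin S]) -(card_imset _ inj_avoid).
rewrite -(card_imset _ inj_through); congr (_ + _).
all: apply: eq_card => S; rewrite !inE; apply/andP/imsetP.
- move=> [xS PS]; have SxS : S :\ x = S.
    by apply/setDidPl; rewrite disjoint_sym disjoints1.
  by exists (lift x @^-1: S); rewrite ?inE imset_preim_lift SxS.
- by move=> [T]; rewrite inE => PT ->; rewrite notin_imset_lift.
- move=> [/negPn xS PS].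
  by exists (lift x @^-1: S); rewrite ?inE imset_preim_lift (setD1K xS).
- by move=> [T]; rewrite inE => PT ->; rewrite setU11.
Qed.

End LiftSets.

Lemma preim_lift_V1 m (x : 'I_m.+1) b :
  x <= b <= x.+1 -> lift x @^-1: V1 m.+1 b = V1 m x.
Proof.
move=> /andP[le_xb le_bx]; apply/setP => j; rewrite !inE /= /bump.
by case: leqP => ? /=; lia.
Qed.

Lemma card_Bedges_split k m a : 0 < k -> a <= m ->
  #|Bedges k m.+1 a| + #|Bedges k m.+1 a.+1| =
  2 * #|Bedges k m a| + 'C(m, (2 * k).-1).
Proof.
move=> k_gt0 le_am; set x : 'I_m.+1 := inord a.
have xE : x = a :> nat by rewrite inordK.
have preimV1 b : a <= b <= a.+1 -> lift x @^-1: V1 m.+1 b = V1 m a.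
  by move=> le_ab; rewrite -xE preim_lift_V1 // xE.
have avoid b : a <= b <= a.+1 ->
    #|[set T : {set 'I_m} | (#|lift x @: T| == 2 * k)
               && odd #|lift x @: T :&: V1 m.+1 b|]| = #|Bedges k m a|.
  move=> le_ab; rewrite BedgesE; apply: eq_card => T.
  by rewrite !inE card_imset_lift card_setI_imset_lift preimV1.
have size_through (T : {set 'I_m}) :
    (#|x |: lift x @: T| == 2 * k) = (#|T| == (2 * k).-1).
  by rewrite cardsU1 notin_imset_lift card_imset_lift -[2 * k](@prednK) ?muln_gt0.
have through :
    #|[set T : {set 'I_m} | (#|x |: lift x @: T| == 2 * k)
               && odd #|(x |: lift x @: T) :&: V1 m.+1 a|]| +
    #|[set T : {set 'I_m} | (#|x |: lift x @: T| == 2 * k)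
               && odd #|(x |: lift x @: T) :&: V1 m.+1 a.+1|]| =
    'C(m, (2 * k).-1).
  rewrite -[m in 'C(m, _)]card_ord -card_draws.
  rewrite -(@card_setID_pred _ (fun T : {set 'I_m} => #|T| == (2 * k).-1)
                            (fun T => odd #|T :&: V1 m a|)).
  congr (_ + _); apply: eq_card => T; rewrite !inE size_through.
  - by rewrite card_setI_setU1_lift preimV1 ?leqnn ?leqnSn // inE xE ltnn.
  - by rewrite card_setI_setU1_lift preimV1 ?leqnn ?leqnSn // inE xE ltnSn.
rewrite !(BedgesE k m.+1) !(card_set_split_lift x) /=.
by rewrite !avoid ?leqnn ?leqnSn // addnACA through [2 * #|_|]mul2n addnn.
Qed.

Lemma b2k_attained k n : exists2 a, a <= n & b2k k n = #|Bedges k n a|.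
Proof.
rewrite /b2k; have [i ->] := @eq_bigmax _ (fun a : 'I_n.+1 => #|Bedges k n a|)
  ltac:(by rewrite card_ord).
by exists i => //; rewrite -ltnS.
Qed.

Lemma Bedges_le_b2k k n a : a <= n -> #|Bedges k n a| <= b2k k n.
Proof.
move=> le_an; rewrite /b2k.
have := leq_bigmax (F := fun b : 'I_n.+1 => #|Bedges k n b|) (inord a).
by rewrite /= inordK.
Qed.

Theorem lemma3p2 (k n : nat) :
  1 <= k -> 2 * k < n ->
  2 * b2k k n.-1 + 'C(n.-1, (2 * k).-1) <= 2 * b2k k n.
Proof.
move=> k_gt0; case: n => [//|m] _ /=.
have [a le_am ->] := b2k_attained k m.
rewrite -card_Bedges_split // mul2n -addnn.
by rewrite leq_add ?Bedges_le_b2k // leqW.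
Qed.
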